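(* Let $n\geq 4$ and let $T_n$ be the group with generators $z,t_1,\dots,t_{n-1}$ and relations $t_i^2=1$ ($1\le i\le n-1$), $(t_jt_{j+1})^3=1$ ($1\le j\le n-2$), $(t_kt_l)^2=z$ (for $k\le l-2$), $z^2=1$ and $zt_i=t_iz$ ($1\le i\le n-1$). Let $l\in\mathbb{N}$, let $\sigma=s_{i_1}s_{i_2}\cdots s_{i_l}\in\mathbb{S}_n$ with $i_1,\dots,i_l\in\{1,\dots,n-1\}$, and let $i,j\in\{1,\dots,n\}$ with $i\neq j$. Then \[ \sigma\triangleright[i\;j]=[\sigma(i)\;\sigma(j)]\,z^l . \]
   Context: $\mathbb{S}_n$ is the symmetric group, $s_k=(k\;k+1)$ denotes the adjacent transposition, and $p:T_n\to\mathbb{S}_n$ is the surjective homomorphism with $p(t_k)=s_k$, $p(z)=1$; its kernel is $\langle z\rangle$, which is central of order $2$. For $\sigma\in\mathbb{S}_n$ and $t\in T_n$, define $\sigma\triangleright t=\bar\sigma t\bar\sigma^{-1}$, where $\bar\sigma\in T_n$ is any element with $p(\bar\sigma)=\sigma$ (independent of the choice since $z$ is central). For $1\le i,j\le n$, $i\ne j$, the elements $[i\;j]\in T_n$ are defined inductively by $[i\;i+1]=t_i$; $[i\;j]=(s_i\triangleright[i+1\;j])\,z$ for $i+1<j$; and $[j\;i]=[i\;j]\,z$ for $i<j$. *)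

From mathcomp Require Import all_boot all_fingroup.
Set Implicit Arguments. Unset Strict Implicit. Unset Printing Implicit Defensive.

(* Generators: [None] is z, [Some k] (k : 'I_n.-1, 0-indexed) is t_(k+1).
   Since every generator is an involution (t_i^2 = 1, z^2 = 1), the group
   presented by the given relations is the monoid of words in the generators
   modulo the congruence generated by the relations; the inverse of a word
   is its reversal. *)
Definition gen (n : nat) := option 'I_n.-1.
Definition word (n : nat) := seq (gen n).

Definition gz {n} : gen n := None.
(* t_(a+1), for a 0-indexed position a < n-1 (junk value z if a >= n-1;
   never used in that range below) *)
Definition gt {n} (a : nat) : gen n := insub a.

Inductive trel (n : nat) : word n -> word n -> Prop :=
| trel_inv (i : 'I_n.-1) : trel [:: Some i; Some i] [::]
| trel_braid (j j' : 'I_n.-1) : val j' = (val j).+1 ->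
    trel [:: Some j; Some j'; Some j; Some j'; Some j; Some j'] [::]
| trel_far (k l : 'I_n.-1) : val k + 2 <= val l ->
    trel [:: Some k; Some l; Some k; Some l] [:: None]
| trel_z2 : trel [:: None; None] [::]
| trel_zcomm (i : 'I_n.-1) : trel [:: None; Some i] [:: Some i; None].

Inductive Teq (n : nat) : word n -> word n -> Prop :=
| Teq_rel u v a b : trel a b -> Teq (u ++ a ++ v) (u ++ b ++ v)
| Teq_refl w : Teq w w
| Teq_sym w1 w2 : Teq w1 w2 -> Teq w2 w1
| Teq_trans w1 w2 w3 : Teq w1 w2 -> Teq w2 w3 -> Teq w1 w3.

Definition winv {n} (w : word n) : word n := rev w.

(* adjacent transposition s_(k+1) = (k+1 k+2) (1-indexed), i.e. swapping
   0-indexed positions k and k+1 *)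
Lemma sadj_proof (n : nat) (k : 'I_n.-1) : (val k).+1 < n.
Proof. by case: n k => [|n] [k /= hk]. Qed.

Definition sadj (n : nat) (k : 'I_n.-1) : 'S_n :=
  tperm (widen_ord (leq_pred n) k) (Ordinal (sadj_proof k)).

Definition pgen (n : nat) (g : gen n) : 'S_n :=
  match g with None => 1%g | Some k => sadj k end.

(* the homomorphism p : T_n -> S_n on words; p (g1 g2 ... gm) is the
   composite map pgen g1 o pgen g2 o ... o pgen gm
   (recall (s * t) x = t (s x) in mathcomp). *)
Fixpoint pw (n : nat) (w : word n) : 'S_n :=
  match w with [::] => 1%g | g :: w' => (pw w' * pgen g)%g end.

Definition sprod (n : nat) (s : seq 'I_n.-1) : 'S_n :=
  pw [seq Some k | k <- s].

(* sigma |> t := sbar t sbar^{-1} for a lift sbar of sigma *)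
Definition tact (n : nat) (sbar t : word n) : word n := sbar ++ t ++ winv sbar.

(* [a+1  a+1+d] (1-indexed) for d >= 1, a 0-indexed:
   [i i+1] = t_i ; [i j] = (s_i |> [i+1 j]) z, using the lift t_i of s_i *)
Fixpoint brd (n : nat) (a d : nat) : word n :=
  match d with
  | 0 => [::]
  | 1 => [:: gt a]
  | d'.+1 => tact [:: gt a] (brd n a.+1 d') ++ [:: gz]
  end.

(* [i j] for 0-indexed positions i j : 'I_n (paper's [i+1 j+1]);
   [j i] = [i j] z for i < j. Junk value [::] when i = j. *)
Definition bracket (n : nat) (i j : 'I_n) : word n :=
  if (val i < val j)%N then brd n i (j - i)
  else if (val j < val i)%N then brd n j (i - j) ++ [:: gz]
  else [::].

(* Conjugating a bracket [a b] by a single generator t_k gives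
   [s_k(a) s_k(b)] z: depending on where k sits relative to a and b this
   is either a far commutation of t_k past the word of [a b] (one z per
   letter that is passed), or a braid move that shortens or lengthens the
   bracket by one.  Conjugating by z changes nothing since z is central.
   Hence conjugating by any word w yields z raised to the number of t-letters
   of w.  As z^2 = 1 only the parity of that number matters, and it is the
   sign of the permutation p(w) = sigma, which is also the parity of l. *)

From Stdlib Require Import Setoid Morphisms RelationClasses.
From mathcomp Require Import all_boot all_fingroup.
From mathcomp Require Import zify.
Set Implicit Arguments. Unset Strict Implicit. Unset Printing Implicit Defensive.

Definition swapn (k x : nat) := if x == k then k.+1 else if x == k.+1 then k else x.

Lemma swapn_k k : swapn k k = k.+1.
Proof. by rewrite /swapn eqxx. Qed.

Lemma swapn_kS k : swapn k k.+1 = k.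
Proof. by rewrite /swapn eqxx; case: eqVneq => //; lia. Qed.

Lemma swapn_id k x : x != k -> x != k.+1 -> swapn k x = x.
Proof. by rewrite /swapn => /negbTE -> /negbTE ->. Qed.

Lemma swapnK k : involutive (swapn k).
Proof.
move=> x; have [->|xk] := eqVneq x k; first by rewrite swapn_k swapn_kS.
have [->|xkS] := eqVneq x k.+1; first by rewrite swapn_kS swapn_k.
by rewrite !swapn_id.
Qed.

(* [brd] behind a lock: otherwise rewriting modulo conversion unfolds it. *)
Fact lbrd_key : unit. Proof. by []. Qed.
Definition lbrd := locked_with lbrd_key brd.

Lemma lbrdE : lbrd = brd.
Proof. exact: locked_withE. Qed.

Section Tn.
Variable n : nat.
Implicit Types u v w : word n.

Lemma Teq_cat_ctx x u v y : Teq u v -> Teq (x ++ u ++ y) (x ++ v ++ y).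
Proof.
elim=> [u0 v0 a b H|w0|w1 w2 _ IH|w1 w2 w3 _ IH1 _ IH2].
- by have := Teq_rel (x ++ u0) (v0 ++ y) H; rewrite -!catA.
- exact: Teq_refl.
- exact: Teq_sym.
- exact: Teq_trans IH2.
Qed.

#[global] Instance Teq_equiv : Equivalence (@Teq n).
Proof. split; [exact: Teq_refl|exact: Teq_sym|exact: Teq_trans]. Qed.

#[global] Instance cat_Teq_proper : Proper (@Teq n ==> @Teq n ==> @Teq n) cat.
Proof.
move=> u u' Hu v v' Hv; transitivity (u' ++ v).
- exact: (Teq_cat_ctx [::] v Hu).
- by have := Teq_cat_ctx u' [::] Hv; rewrite !cats0.
Qed.

#[global] Instance cons_Teq_proper x : Proper (@Teq n ==> @Teq n) (cons x).
Proof. by move=> u v H; apply: (cat_Teq_proper (Teq_refl [:: x]) H). Qed.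

Lemma trel_Teq a b w : trel a b -> Teq (a ++ w) (b ++ w).
Proof. exact: (Teq_rel [::] w). Qed.

Lemma gtE a (ha : a < n.-1) : gt a = Some (Ordinal ha) :> gen n.
Proof. by rewrite /gt insubT. Qed.

Lemma zzK w : Teq (gz :: gz :: w) w.
Proof. exact: (trel_Teq w (trel_z2 n)). Qed.

Lemma ttK a w : a < n.-1 -> Teq (gt a :: gt a :: w) w.
Proof. by move=> ha; rewrite gtE; apply: (trel_Teq w (trel_inv (Ordinal ha))). Qed.

Lemma z_comm u w : Teq (gz :: u ++ w) (u ++ gz :: w).
Proof.
elim: u => [|[x|] u IH] /=; first reflexivity.
- by rewrite -IH; apply: (trel_Teq (u ++ w) (trel_zcomm x)).
- by rewrite IH; reflexivity.
Qed.

Lemma z_comm_gt a w : Teq (gz :: gt a :: w) (gt a :: gz :: w).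
Proof. exact: (z_comm [:: gt a]). Qed.

Lemma z_comm_lbrd a d w : Teq (gz :: lbrd n a d ++ w) (lbrd n a d ++ gz :: w).
Proof. exact: z_comm. Qed.

Lemma nseqz_comm c u : Teq (nseq c gz ++ u) (u ++ nseq c gz).
Proof. by elim: c => [|c IH] /=; [rewrite cats0 | rewrite IH z_comm]; reflexivity. Qed.

Lemma nseqz_odd c : Teq (nseq c (@gz n)) (nseq (odd c) gz).
Proof.
elim: c => [|c IH] /=; first reflexivity.
by rewrite IH; case: (odd c) => /=; [rewrite zzK|]; reflexivity.
Qed.

Lemma t_far_comm_lt a b w : a < n.-1 -> b < n.-1 -> a + 2 <= b ->
  Teq (gt a :: gt b :: w) (gt b :: gt a :: gz :: w).
Proof.
move=> ha hb hab.
transitivity (gt a :: gt b :: gt a :: gt b :: gt b :: gt a :: w).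
  by rewrite (ttK _ hb) (ttK _ ha); reflexivity.
have := trel_Teq (gt b :: gt a :: w) (@trel_far n (Ordinal ha) (Ordinal hb) hab).
rewrite -!(gtE ha) -!(gtE hb) /= => ->.
by rewrite !z_comm_gt; reflexivity.
Qed.

Lemma t_far_comm a b w : a < n.-1 -> b < n.-1 -> a + 2 <= b \/ b + 2 <= a ->
  Teq (gt a :: gt b :: w) (gt b :: gt a :: gz :: w).
Proof.
move=> ha hb [hab|hba]; first exact: t_far_comm_lt.
by rewrite (t_far_comm_lt (gz :: w) hb ha hba) zzK; reflexivity.
Qed.

Lemma t_braid a w : a.+1 < n.-1 ->
  Teq (gt a :: gt a.+1 :: gt a :: w) (gt a.+1 :: gt a :: gt a.+1 :: w).
Proof.
move=> haS; have ha : a < n.-1 by apply: ltnW.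
transitivity (gt a :: gt a.+1 :: gt a :: gt a.+1 :: gt a :: gt a.+1 ::
              gt a.+1 :: gt a :: gt a.+1 :: w).
  by rewrite (ttK _ haS) (ttK _ ha) (ttK _ haS); reflexivity.
have := trel_Teq (gt a.+1 :: gt a :: gt a.+1 :: w)
  (@trel_braid n (Ordinal ha) (Ordinal haS) erefl).
by rewrite -!(gtE ha) -!(gtE haS) /= => ->; reflexivity.
Qed.

Lemma lbrd1 a : lbrd n a 1 = [:: gt a].
Proof. by rewrite lbrdE. Qed.

Lemma lbrdSS a d : lbrd n a d.+2 = gt a :: lbrd n a.+1 d.+1 ++ [:: gt a; gz].
Proof. by rewrite lbrdE /= /tact /winv /= -catA. Qed.

End Tn.

Ltac reassoc := do 3 rewrite -?catA ?cat_cons ?cat0s.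
Ltac push_z := repeat first [rewrite zzK | rewrite z_comm_lbrd | rewrite z_comm_gt].

Section Brackets.
Variable n : nat.
Implicit Types w : word n.

(* The disjunction says that {k, k+1} misses {a, a+d}, so that s_k commutes
   with the transposition (a a+d); the case k = a+1 needs a braid move, all
   others are far commutations. *)
Lemma t_comm_lbrd d a k w : 0 < d -> a + d < n -> k < n.-1 ->
  k + 2 <= a \/ a + d + 1 <= k \/ (a + 1 <= k /\ k + 2 <= a + d) ->
  Teq (gt k :: lbrd n a d ++ w) (lbrd n a d ++ gz :: gt k :: w).
Proof.
elim/ltn_ind: d a k w => -[//|[|d]] IH a k w _ hd hk hkad.
  by rewrite lbrd1 /= (t_far_comm _ hk); try lia; push_z; reflexivity.
rewrite lbrdSS; reassoc.
have ha : a < n.-1 by lia.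
have [ek|nk] := eqVneq k a.+1.
  subst k; case: d IH hd hkad => [|d] IH hd hkad; first lia.
  rewrite lbrdSS; reassoc; rewrite -(t_braid _ hk).
  rewrite (IH d.+1 _ a.+2 a); try lia.
  by push_z; rewrite (t_braid _ hk); reflexivity.
rewrite (t_far_comm _ hk ha); try lia; push_z.
rewrite (IH d.+1 _ a.+1 k); try lia; push_z.
by rewrite (t_far_comm _ hk ha); try lia; push_z; reflexivity.
Qed.

Lemma t_lbrd_shorten e a k w : k = a + e + 1 -> a + e + 2 < n ->
  Teq (gt k :: lbrd n a e.+2 ++ w) (lbrd n a e.+1 ++ gz :: gt k :: w).
Proof.
elim: e a w => [|e IH] a w ek hn'.
  subst k; rewrite addn0 addn1 lbrdSS !lbrd1; reassoc.
  have haS : a.+1 < n.-1 by lia.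
  by rewrite -(t_braid _ haS) ttK; try lia; push_z; reflexivity.
have hk : k < n.-1 by lia.
have ha : a < n.-1 by lia.
rewrite (@lbrdSS n a e.+1) (@lbrdSS n a e); reassoc.
rewrite (t_far_comm _ hk ha); try lia; push_z.
rewrite (IH a.+1); try lia; push_z.
by rewrite (t_far_comm _ hk ha); try lia; push_z; reflexivity.
Qed.

Lemma t_lbrd_lengthen e a k w : k = a + e + 1 -> k < n.-1 ->
  Teq (gt k :: lbrd n a e.+1 ++ w) (lbrd n a e.+2 ++ gz :: gt k :: w).
Proof.
elim: e a w => [|e IH] a w ek hk.
  subst k; rewrite addn0 addn1 lbrdSS !lbrd1; reassoc; push_z.
  by rewrite t_braid ?ttK; try lia; reflexivity.
have ha : a < n.-1 by lia.
rewrite (@lbrdSS n a e) (@lbrdSS n a e.+1); reassoc.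
rewrite (t_far_comm _ hk ha); try lia; push_z.
rewrite (IH a.+1); try lia; push_z.
by rewrite (t_far_comm _ hk ha); try lia; push_z; reflexivity.
Qed.

Definition nbracket (a b : nat) : word n :=
  if a < b then lbrd n a (b - a)
  else if b < a then lbrd n b (a - b) ++ [:: gz] else [::].

Lemma nbracket_lt a b : a < b -> nbracket a b = lbrd n a (b - a).
Proof. by rewrite /nbracket => ->. Qed.

Lemma nbracket_gt a b : b < a -> nbracket a b = lbrd n b (a - b) ++ [:: gz].
Proof. by move=> hba; rewrite /nbracket ltnNge (ltnW hba) /= hba. Qed.

Lemma nbracket_swap a b : a != b -> Teq (nbracket a b ++ [:: gz]) (nbracket b a).
Proof.
move=> ne_ab; case: (ltngtP a b) => [hab|hba|eab].
- by rewrite (nbracket_lt hab) (nbracket_gt hab); reflexivity.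
- by rewrite (nbracket_lt hba) (nbracket_gt hba) -catA /= zzK cats0; reflexivity.
- by rewrite eab eqxx in ne_ab.
Qed.

Lemma conj_t_nbracket_lt a b k : a < b -> b < n -> k < n.-1 ->
  Teq (gt k :: nbracket a b ++ [:: gt k])
      (nbracket (swapn k a) (swapn k b) ++ [:: gz]).
Proof.
move=> hab hb hk; rewrite (nbracket_lt hab).
have [far|[ea|[ea|[[eb hak]|eb]]]] :
    (k + 2 <= a \/ b + 1 <= k \/ (a + 1 <= k /\ k + 2 <= b)) \/
    (k.+1 = a \/ k = a \/ (k.+1 = b /\ a < k) \/ k = b) by lia.
- rewrite !swapn_id; try (apply/eqP; lia).
  by rewrite (nbracket_lt hab) t_comm_lbrd ?ttK; try lia; reflexivity.
- subst a; rewrite swapn_kS swapn_id; try (apply/eqP; lia).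
  rewrite nbracket_lt; last lia.
  have -> : b - k = (b - k.+2).+2 by lia.
  have -> : b - k.+1 = (b - k.+2).+1 by lia.
  by rewrite lbrdSS; reassoc; push_z; reflexivity.
- subst a; rewrite swapn_k.
  have [eb|nb] := eqVneq b k.+1.
    subst b; rewrite swapn_kS nbracket_gt // subSnn lbrd1 /= ttK //.
    by push_z; reflexivity.
  rewrite swapn_id; try (apply/eqP; lia).
  rewrite nbracket_lt; last lia.
  have -> : b - k = (b - k.+2).+2 by lia.
  have -> : b - k.+1 = (b - k.+2).+1 by lia.
  by rewrite lbrdSS; reassoc; rewrite ttK //; push_z; rewrite ttK //; reflexivity.
- subst b; rewrite swapn_kS swapn_id; try (apply/eqP; lia).
  rewrite nbracket_lt; last lia.
  have -> : k - a = (k - a - 1).+1 by lia.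
  have -> : k.+1 - a = (k - a - 1).+2 by lia.
  by rewrite (@t_lbrd_shorten (k - a - 1) a k) ?ttK; try lia; reflexivity.
- subst b; rewrite swapn_k swapn_id; try (apply/eqP; lia).
  rewrite nbracket_lt; last lia.
  have -> : k - a = (k - a - 1).+1 by lia.
  have -> : k.+1 - a = (k - a - 1).+2 by lia.
  by rewrite (@t_lbrd_lengthen (k - a - 1) a k) ?ttK; try lia; reflexivity.
Qed.

Lemma conj_t_nbracket a b k : a != b -> a < n -> b < n -> k < n.-1 ->
  Teq (gt k :: nbracket a b ++ [:: gt k])
      (nbracket (swapn k a) (swapn k b) ++ [:: gz]).
Proof.
move=> hab ha hb hk; case: (ltngtP a b) => [lt_ab|lt_ba|eab].
- exact: conj_t_nbracket_lt.
- rewrite (nbracket_gt lt_ba) -(nbracket_lt lt_ba) -catA /= z_comm_gt.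
  have := cat_Teq_proper (conj_t_nbracket_lt lt_ba ha hk) (Teq_refl [:: gz]).
  rewrite /= -!catA /= => ->.
  rewrite zzK cats0 nbracket_swap; first reflexivity.
  by rewrite (can_eq (swapnK k)).
- by rewrite eab eqxx in hab.
Qed.

End Brackets.

Section Conjugation.
Variable n : nat.

Lemma sadj_val (k : 'I_n.-1) (i : 'I_n) : val (sadj k i) = swapn k (val i).
Proof.
rewrite /sadj; case: tpermP => [->|->|ne_k ne_kS] /=; first by rewrite swapn_k.
  by rewrite swapn_kS.
by rewrite swapn_id //; apply/eqP => e; [apply: ne_k | apply: ne_kS]; apply: val_inj.
Qed.

Lemma bracketE (i j : 'I_n) : bracket i j = nbracket n i j.
Proof. by rewrite /bracket /nbracket lbrdE. Qed.

Lemma tact_cons g (w t : word n) : tact (g :: w) t = tact [:: g] (tact w t).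
Proof. by rewrite /tact /winv rev_cons -cats1 /= -!catA. Qed.

Lemma conj_gen_bracket (g : gen n) (i j : 'I_n) : i != j ->
  Teq (tact [:: g] (bracket i j))
      (bracket (pgen g i) (pgen g j) ++ nseq (isSome g) gz).
Proof.
move=> hij; rewrite /tact /winv /= !bracketE.
case: g => [k|] /=.
- have -> : Some k = gt (val k) by rewrite /gt valK.
  rewrite conj_t_nbracket //; last by case: k.
  by rewrite !sadj_val; reflexivity.
- by rewrite !perm1 cats0 z_comm zzK cats0; reflexivity.
Qed.

Lemma conj_word_bracket (w : word n) (i j : 'I_n) : i != j ->
  Teq (tact w (bracket i j))
      (bracket (pw w i) (pw w j) ++ nseq (count isSome w) gz).
Proof.
elim: w i j => [|g w IH] i j hij /=.
  by rewrite /tact /winv /= cats0 !perm1 cats0; reflexivity.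
have hij' : pw w i != pw w j by rewrite (inj_eq (@perm_inj _ _)).
rewrite tact_cons {1}/tact /winv /= (IH i j hij) -catA nseqz_comm.
rewrite catA -cat_cons -[g :: _ ++ _]/(tact [:: g] _) conj_gen_bracket //.
by rewrite -catA -nseqD !permM; reflexivity.
Qed.

Lemma odd_pw (w : word n) : odd_perm (pw w) = odd (count isSome w).
Proof.
elim: w => [|[k|] w IH] /=; first by rewrite odd_perm1.
- rewrite odd_permM IH /sadj odd_tperm oddD addbC.
  by have -> : (widen_ord (leq_pred n) k != Ordinal (sadj_proof k))
    by apply/eqP => /(congr1 val) /=; lia.
- by rewrite odd_permM odd_perm1 IH addbF.
Qed.

End Conjugation.

Theorem proposition3p5 (n : nat) (hn : 4 <= n) (l : nat)
  (s : seq 'I_n.-1) (hl : size s = l) (i j : 'I_n) (hij : i != j)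
  (sbar : word n) (hlift : pw sbar = sprod s) :
  Teq (tact sbar (bracket i j))
      (bracket (sprod s i) (sprod s j) ++ nseq l gz).
Proof.
rewrite (conj_word_bracket _ hij) hlift.
have odd_letters : odd (count isSome sbar) = odd l.
  by rewrite -odd_pw hlift /sprod odd_pw -hl count_map count_predT.
by rewrite nseqz_odd odd_letters -nseqz_odd; reflexivity.
Qed.
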